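(* For every real $u>1$, $$\sigma(u)=1+\sum_{0<k<u}P_k(u),\qquad \rho(u)=1+\sum_{0<k<u}(-1)^kP_k(u),$$ where the sums run over integers $k$ with $0<k<u$.
   Context: $\rho$ is the Dickman function: continuous on $[0,\infty)$, $\rho(u)=1$ on $[0,1]$, $u\rho'(u)=-\rho(u-1)$ for $u>1$. $\omega$ is the Buchstab function: continuous on $[1,\infty)$, $u\omega(u)=1$ on $[1,2]$, $u\omega'(u)=\omega(u-1)-\omega(u)$ for $u>2$; and $\sigma(u)=(u+1)\omega(u+1)$. The functions $P_k$ are defined by $P_0(u)=1$ for $u\ge 0$, and for integers $k\ge1$, $P_k:[k,\infty)\to\mathbb{R}$ is the function with $P_k(k)=0$ and $uP_k'(u)=P_{k-1}(u-1)$ for $u\ge k$, i.e. $P_k(u)=\int_k^u P_{k-1}(x-1)\,\frac{dx}{x}$. *)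

From Stdlib Require Import Reals Lra List.
From Coquelicot Require Import Coquelicot.
Open Scope R_scope.

Fixpoint P (k : nat) (u : R) : R :=
  match k with
  | O => 1
  | S j => RInt (fun x => P j (x - 1) / x) (INR (S j)) u
  end.

Definition sigmaB (omega : R -> R) (u : R) : R := (u + 1) * omega (u + 1).

(* Sum of f k over the integers k with 0 < k < u (for u > 0 all such k are
   <= up u, so the list 1..up u filtered by k < u enumerates them). *)
Definition sum_0_lt (u : R) (f : nat -> R) : R :=
  fold_right Rplus 0
    (map f (filter (fun k => if Rlt_dec (INR k) u then true else false)
                   (seq 1 (Z.to_nat (up u))))).

Definition cont_within (D : R -> Prop) (f : R -> R) (x : R) : Prop :=
  filterlim f (within D (locally x)) (locally (f x)).

Definition is_dickman (rho : R -> R) : Prop :=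
  (forall x, 0 <= x -> cont_within (fun y => 0 <= y) rho x) /\
  (forall x, 0 <= x <= 1 -> rho x = 1) /\
  (forall x, 1 < x -> ex_derive rho x /\ x * Derive rho x = - rho (x - 1)).

Definition is_buchstab (omega : R -> R) : Prop :=
  (forall x, 1 <= x -> cont_within (fun y => 1 <= y) omega x) /\
  (forall x, 1 <= x <= 2 -> x * omega x = 1) /\
  (forall x, 2 < x -> ex_derive omega x /\
                      x * Derive omega x = omega (x - 1) - omega x).

From Stdlib Require Import Reals Lra Lia List ZArith.
From Coquelicot Require Import Coquelicot.
Open Scope R_scope.

(* Both identities are instances of one fact about the delay equation
     f = 1 on [0,1],   x f'(x) = c f(x-1)  (x > 1),   f right-continuous,
   namely  f(u) = 1 + sum_{0<k<u} c^k P_k(u)  for u > 1; the Dickman function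
   is the case c = -1 and sigma(u) = (u+1) omega(u+1) the case c = 1.
   The file proceeds as follows.
   - Regularity of P_k: P_k is continuous on (k-1, oo) and, by the fundamental
     theorem of calculus, u P_{k+1}'(u) = P_k(u-1) for u > k.
   - The partial sums S_n(u) = sum_{k=1}^n c^k P_k(u) satisfy, for u > n,
     u S_{n+1}'(u) = c (1 + S_n(u-1)); this is the same equation as f.
   - By induction on n, f = 1 + S_n on (n, n+1]: on (n+1, n+2] the difference
     f - 1 - S_{n+1} has zero derivative, hence is constant, and its right limit
     at n+1 vanishes since P_{n+1}(n+1) = 0.
   - Finally sum_0_lt u is identified with the sum over k = 1..n when
     n < u <= n+1, and the hypotheses of the general fact are checked for rho
     and for sigma. *)

Lemma zero_derive_const (h : R -> R) (a b : R) :
  (forall x, a < x <= b -> is_derive h x 0) ->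
  forall y, a < y <= b -> h y = h b.
Proof.
  intros Hh y Hy.
  destruct (MVT_gen h y b (fun _ => 0)) as [x [_ Hx]].
  - intros x Hx. rewrite Rmin_left, Rmax_right in Hx by lra. apply Hh. lra.
  - intros x Hx. rewrite Rmin_left, Rmax_right in Hx by lra.
    apply continuity_pt_filterlim, (ex_derive_continuous (V:=R_NormedModule)).
    exists 0. apply Hh. lra.
  - lra.
Qed.

Lemma right_limit_agree (f g : R -> R) (a b : R) :
  a < b ->
  filterlim f (at_right a) (locally (f a)) ->
  continuous g a ->
  (forall x, a < x < b -> f x = g x) ->
  f a = g a.
Proof.
  intros Hab Hf Hg Hfg.
  apply (filterlim_locally_unique (F := at_right a) f); [exact Hf|].
  apply (filterlim_ext_loc (F := at_right a) g).
  - assert (Hd : 0 < b - a) by lra.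
    exists (mkposreal _ Hd). intros x Hx Hax. symmetry. apply Hfg.
    apply Rabs_lt_between' in Hx. simpl in Hx. lra.
  - apply (filterlim_filter_le_1 (F := locally a) g); [apply filter_le_within | exact Hg].
Qed.

Lemma right_continuous_of_within (D : R -> Prop) (f : R -> R) (x : R) :
  (forall y, x < y -> D y) -> cont_within D f x ->
  filterlim f (at_right x) (locally (f x)).
Proof.
  intros HD Hf. apply (filterlim_filter_le_1 (F := within D (locally x)) f); [|exact Hf].
  intros Q HQ. unfold at_right, within in *. revert HQ. apply filter_imp.
  intros y HQy Hxy. exact (HQy (HD y Hxy)).
Qed.

Lemma shift_at_right (x t : R) :
  filterlim (fun y => y + t) (at_right x) (at_right (x + t)).
Proof.
  intros Q [d Hd]. exists d. intros y Hy Hxy. apply Hd; [|lra].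
  apply Rabs_lt_between' in Hy. apply Rabs_lt_between'. lra.
Qed.

Lemma integrand_continuous (k : nat) (y : R) :
  (forall x, INR k - 1 < x -> continuous (P k) x) -> INR k < y ->
  continuous (fun x => P k (x - 1) / x) y.
Proof.
  intros HPk Hy. pose proof (pos_INR k).
  apply (continuous_mult (fun x => P k (x - 1)) (fun x => / x)).
  - apply (continuous_comp (fun x => x - 1) (P k)).
    + apply (ex_derive_continuous (V:=R_NormedModule)). auto_derive. exact I.
    + apply HPk. lra.
  - apply continuous_Rinv. lra.
Qed.

Lemma P_succ_derive (k : nat) :
  (forall x, INR k - 1 < x -> continuous (P k) x) ->
  forall u, INR k < u -> is_derive (P (S k)) u (P k (u - 1) / u).
Proof.
  intros HPk u Hu. pose proof (pos_INR k).
  apply (is_derive_RInt (fun x => P k (x - 1) / x) _ (INR (S k)) u).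
  - assert (Hd : 0 < (u - INR k) / 2) by lra.
    exists (mkposreal _ Hd). intros y Hy. apply Rabs_lt_between' in Hy. simpl in Hy.
    apply (RInt_correct (V:=R_CompleteNormedModule)),
          (ex_RInt_continuous (V:=R_CompleteNormedModule)).
    intros z Hz. apply integrand_continuous; [exact HPk|].
    rewrite S_INR in Hz. destruct Hz as [Hz _].
    assert (INR k < Rmin (INR k + 1) y) by (apply Rmin_glb_lt; lra). lra.
  - apply integrand_continuous; assumption.
Qed.

Lemma P_continuous (k : nat) (x : R) : INR k - 1 < x -> continuous (P k) x.
Proof.
  revert x; induction k as [|k IHk]; intros x Hx.
  - apply continuous_const.
  - rewrite S_INR in Hx. apply (ex_derive_continuous (V:=R_NormedModule)).
    eexists. apply P_succ_derive; [exact IHk | lra].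
Qed.

Lemma P_derive (k : nat) (u : R) :
  INR k < u -> is_derive (P (S k)) u (P k (u - 1) / u).
Proof. apply P_succ_derive, P_continuous. Qed.

Lemma P_start (k : nat) : P (S k) (INR (S k)) = 0.
Proof. exact (RInt_point (V:=R_CompleteNormedModule) _ _). Qed.

Fixpoint psum (c : R) (n : nat) (u : R) : R :=
  match n with
  | O => 0
  | S m => psum c m u + c ^ S m * P (S m) u
  end.

Lemma psum_derive_step (c : R) (n : nat) (u D : R) :
  INR n < u -> is_derive (psum c n) u D ->
  is_derive (psum c (S n)) u (D + c ^ S n * (P n (u - 1) / u)).
Proof.
  intros Hu HD.
  apply (is_derive_plus (psum c n) (fun x => c ^ S n * P (S n) x)); [exact HD|].
  apply (is_derive_scal (P (S n))), P_derive, Hu.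
Qed.

(* The partial sums solve the delay equation one step behind:
   u S_{n+1}'(u) = c (1 + S_n(u-1)) for u > n. *)
Lemma psum_derive (c : R) (n : nat) (u : R) :
  INR n < u -> is_derive (psum c (S n)) u (c * (1 + psum c n (u - 1)) / u).
Proof.
  induction n as [|n IHn]; intros Hu.
  - simpl in Hu.
    replace (c * (1 + psum c 0 (u - 1)) / u)
      with (0 + c ^ 1 * (P 0 (u - 1) / u)) by (simpl; field; lra).
    apply psum_derive_step; [exact Hu | apply (is_derive_const (V:=R_NormedModule))].
  - rewrite S_INR in Hu. pose proof (pos_INR n).
    replace (c * (1 + psum c (S n) (u - 1)) / u)
      with (c * (1 + psum c n (u - 1)) / u + c ^ S (S n) * (P (S n) (u - 1) / u))
      by (simpl; field; lra).
    apply psum_derive_step; [rewrite S_INR; lra | apply IHn; lra].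
Qed.

Lemma psum_continuous (c : R) (n : nat) (x : R) :
  INR n - 1 < x -> continuous (psum c n) x.
Proof.
  destruct n as [|n]; intros Hx.
  - apply continuous_const.
  - rewrite S_INR in Hx. apply (ex_derive_continuous (V:=R_NormedModule)).
    eexists. apply psum_derive. lra.
Qed.

Lemma psum_start (c : R) (n : nat) : psum c (S n) (INR (S n)) = psum c n (INR (S n)).
Proof.
  change (psum c n (INR (S n)) + c ^ S n * P (S n) (INR (S n)) = psum c n (INR (S n))).
  rewrite P_start. ring.
Qed.

Lemma window_exists (u : R) : 0 < u -> exists n, INR n < u <= INR n + 1.
Proof.
  intros Hu. destruct (nfloor_ex u) as [m [_ Hm]]; [lra|].
  assert (Hle : u <= INR (S m)) by (rewrite S_INR; lra). clear Hm.
  induction (S m) as [|k IHk].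
  - simpl in Hle. lra.
  - destruct (Rle_lt_dec u (INR k)) as [Hk|Hk]; [exact (IHk Hk)|].
    exists k. rewrite S_INR in Hle. lra.
Qed.

Lemma sum_0_lt_window (u : R) (n : nat) (g : nat -> R) :
  INR n < u <= INR n + 1 ->
  sum_0_lt u g = fold_right Rplus 0 (map g (seq 1 n)).
Proof.
  intros Hu. unfold sum_0_lt. pose proof (pos_INR n).
  destruct (archimed u) as [Hup _].
  assert (Hpos : (0 < up u)%Z) by (apply lt_IZR; lra).
  set (N := Z.to_nat (up u)).
  assert (HN : INR N = IZR (up u))
    by (unfold N; rewrite INR_IZR_INZ, Z2Nat.id; [reflexivity | lia]).
  assert (HnN : (n < N)%nat) by (apply INR_lt; lra).
  replace N with (n + (N - n))%nat by lia.
  set (below_u := fun k : nat => if Rlt_dec (INR k) u then true else false).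
  rewrite seq_app, filter_app.
  rewrite (filter_ext_in below_u (fun _ => true)), List.filter_true.
  - rewrite (filter_ext_in below_u (fun _ => false)), List.filter_false, app_nil_r;
      [reflexivity|].
    intros k Hk. apply in_seq in Hk.
    unfold below_u. destruct (Rlt_dec (INR k) u) as [Hlt|]; [|reflexivity].
    assert (INR (S n) <= INR k) by (apply le_INR; lia). rewrite S_INR in *. lra.
  - intros k Hk. apply in_seq in Hk.
    unfold below_u. destruct (Rlt_dec (INR k) u) as [|Hge]; [reflexivity|].
    assert (INR k <= INR n) by (apply le_INR; lia). lra.
Qed.

Lemma fold_right_Rplus_init (l : list R) (a : R) :
  fold_right Rplus a l = fold_right Rplus 0 l + a.
Proof. induction l as [|x l IHl]; simpl; [ring | rewrite IHl; ring]. Qed.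

Lemma fold_psum (c : R) (n : nat) (u : R) :
  fold_right Rplus 0 (map (fun k => c ^ k * P k u) (seq 1 n)) = psum c n u.
Proof.
  induction n as [|n IHn]; [reflexivity|].
  rewrite seq_S, map_app, fold_right_app, fold_right_Rplus_init, IHn.
  replace (1 + n)%nat with (S n) by lia. simpl. ring.
Qed.

Section DelayEquation.

Variables (f : R -> R) (c : R).
Hypothesis f_init : forall x, 0 <= x <= 1 -> f x = 1.
Hypothesis f_derive : forall x, 1 < x -> is_derive f x (c * f (x - 1) / x).
Hypothesis f_right_cont : forall x, 1 <= x -> filterlim f (at_right x) (locally (f x)).

Lemma delay_solution_window (n : nat) (u : R) :
  INR n < u <= INR n + 1 -> f u = 1 + psum c n u.
Proof.
  revert u; induction n as [|n IHn]; intros u Hu.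
  - simpl in *. rewrite f_init; lra.
  - rewrite S_INR in Hu. pose proof (pos_INR n).
    set (a := INR (S n)).
    assert (Ha : a = INR n + 1) by apply S_INR.
    set (d := f u - (1 + psum c (S n) u)).
    (* f - 1 - S_{n+1} has zero derivative on (a, u], by the induction hypothesis *)
    assert (Hzero : forall x, a < x <= u ->
              is_derive (fun y => f y - (1 + psum c (S n) y)) x 0).
    { intros x Hx.
      replace 0 with (c * f (x - 1) / x - (0 + c * (1 + psum c n (x - 1)) / x))
        by (rewrite (IHn (x - 1)) by lra; field; lra).
      apply (is_derive_minus f (fun y => 1 + psum c (S n) y)); [apply f_derive; lra|].
      apply (is_derive_plus (fun _ => 1) (psum c (S n))).
      - apply (is_derive_const (V:=R_NormedModule)).
      - apply psum_derive. lra. }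
    assert (Hconst : forall x, a < x < u -> f x = 1 + psum c (S n) x + d).
    { intros x Hx. unfold d.
      rewrite <- (zero_derive_const _ a u Hzero x) by lra. ring. }
    (* its right limit at a is d, but its value at a is 0 *)
    assert (Hlim : f a = 1 + psum c (S n) a + d).
    { apply (right_limit_agree f (fun x => 1 + psum c (S n) x + d) a u); try lra.
      - apply f_right_cont. lra.
      - apply (continuous_plus (fun x => 1 + psum c (S n) x) (fun _ => d));
          [|apply continuous_const].
        apply (continuous_plus (fun _ => 1) (psum c (S n))); [apply continuous_const|].
        apply psum_continuous. rewrite S_INR. lra.
      - exact Hconst. }
    assert (Hstart : f a = 1 + psum c (S n) a).
    { unfold a. rewrite psum_start. apply IHn. rewrite S_INR. lra. }
    assert (Hd : d = 0) by lra.
    unfold d in Hd. lra.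
Qed.

Theorem delay_solution (u : R) :
  1 < u -> f u = 1 + sum_0_lt u (fun k => c ^ k * P k u).
Proof.
  intros Hu. destruct (window_exists u) as [n Hn]; [lra|].
  rewrite (sum_0_lt_window u n), fold_psum by exact Hn.
  apply delay_solution_window, Hn.
Qed.

End DelayEquation.

Lemma dickman_delay_solution (rho : R -> R) (u : R) :
  is_dickman rho -> 1 < u ->
  rho u = 1 + sum_0_lt u (fun k => (-1) ^ k * P k u).
Proof.
  intros [Hcont [Hinit Hder]]. apply delay_solution.
  - exact Hinit.
  - intros x Hx. destruct (Hder x Hx) as [Hex Heq].
    replace (-1 * rho (x - 1) / x) with (Derive rho x) by (field_simplify_eq; lra).
    apply Derive_correct, Hex.
  - intros x Hx. apply (right_continuous_of_within (fun y => 0 <= y)).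
    + intros y Hy. lra.
    + apply Hcont. lra.
Qed.

(* sigma(u) = (u+1) omega(u+1) solves the delay equation with c = 1: the
   equation for omega at u+1 gives  sigma'(u) = omega(u+1) + (u+1) omega'(u+1)
   = omega(u) = sigma(u-1)/u, and sigma = 1 on [0,1] since u omega(u) = 1 on [1,2]. *)
Lemma buchstab_delay_solution (omega : R -> R) (u : R) :
  is_buchstab omega -> 1 < u ->
  sigmaB omega u = 1 + sum_0_lt u (fun k => 1 ^ k * P k u).
Proof.
  intros [Hcont [Hinit Hder]]. apply delay_solution; unfold sigmaB.
  - intros x Hx. apply Hinit. lra.
  - intros x Hx. destruct (Hder (x + 1)) as [Hex Heq]; [lra|].
    replace (x + 1 - 1) with x in Heq by ring.
    replace (1 * ((x - 1 + 1) * omega (x - 1 + 1)) / x)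
      with (1 * omega (x + 1) + (x + 1) * (1 * Derive omega (x + 1)))
      by (replace (x - 1 + 1) with x by ring; field_simplify_eq; lra).
    auto_derive; [exact Hex | reflexivity].
  - intros x Hx.
    assert (Hshift : filterlim (fun y => y + 1) (at_right x) (locally (x + 1)))
      by exact (filterlim_filter_le_2 _ (filter_le_within (F := locally (x + 1)) _)
                  (shift_at_right x 1)).
    assert (Homega :
      filterlim (fun y => omega (y + 1)) (at_right x) (locally (omega (x + 1)))).
    { apply (filterlim_comp _ _ _ _ omega _ _ _ (shift_at_right x 1)).
      apply (right_continuous_of_within (fun y => 1 <= y)).
      - intros y Hy. lra.
      - apply Hcont. lra. }
    apply (filterlim_comp_2 _ _ Rmult Hshift Homega), (filterlim_mult (K:=R_AbsRing)).
Qed.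

Theorem mainTheorem3 (rho omega : R -> R) :
  is_dickman rho -> is_buchstab omega ->
  forall u : R, 1 < u ->
    sigmaB omega u = 1 + sum_0_lt u (fun k => P k u) /\
    rho u = 1 + sum_0_lt u (fun k => (-1) ^ k * P k u).
Proof.
  intros Hrho Homega u Hu. split.
  - rewrite (buchstab_delay_solution omega u Homega Hu).
    f_equal. unfold sum_0_lt. f_equal. apply map_ext. intros k. rewrite pow1. ring.
  - exact (dickman_delay_solution rho u Hrho Hu).
Qed.
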